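(* Every realizable rooted chirotope $(\chi,u)$ with ground set $X$ has a realization $\mathcal P=\{\mathfrak p_x\}_{x\in X}$ such that $\mathfrak p_u=(0,1)$, $\mathfrak p_{u^+}=(0,0)$, $\mathfrak p_{u^-}=(1,0)$, and the half-line $\mathfrak p_u+\mathbb R_{\ge 0}(0,1)$ does not cross any line of the set $\{(\mathfrak p_x\mathfrak p_y): x,y\in X\setminus\{u\},\ x\ne y\}$.
   Context: A chirotope on a finite set $X$ is a map $\chi$ from ordered triples of distinct elements of $X$ to $\{-1,1\}$ satisfying the usual alternating symmetry and the interiority and transitivity axioms. It is realizable if there exist points $\mathfrak p_x\in\mathbb R^2$ ($x\in X$), no three collinear, such that $\chi(x,y,z)=1$ iff $\mathfrak p_x,\mathfrak p_y,\mathfrak p_z$ are in counterclockwise order; such a point family is a realization of $\chi$. An element $u$ is extreme if there is $y\ne u$ with $\chi(u,y,z)$ constant over $z\in X\setminus\{u,y\}$ (for realizations: $\mathfrak p_u$ is a vertex of the convex hull). A rooted chirotope is a pair $(\chi,u)$ with $u$ an extreme element of $\chi$; $u^+$ and $u^-$ denote the successor and predecessor of $u$, in counterclockwise order, on the convex hull of $\chi$ (i.e. $u^+$ is the element $y$ with $\chi(u,y,z)=1$ for all $z\notin\{u,y\}$, and $u^-$ the element $y$ with $\chi(y,u,z)=1$ for all $z\notin\{u,y\}$). *)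

From HB Require Import structures.
From mathcomp Require Import all_boot all_order all_algebra.
From mathcomp Require Import reals.
Set Implicit Arguments. Unset Strict Implicit. Unset Printing Implicit Defensive.
Import Order.TTheory GRing.Theory Num.Theory.
Local Open Scope ring_scope.

(* A (candidate) chirotope on a finite set X: a map from triples to int;
   only its values on triples of pairwise distinct elements matter. *)
Definition distinct3 (X : eqType) (x y z : X) := [&& x != y, y != z & x != z].

Definition is_chirotope (X : finType) (chi : X -> X -> X -> int) : Prop :=
  (forall x y z, distinct3 x y z -> chi x y z = 1 \/ chi x y z = -1) /\
  (* alternating symmetry (transpositions generate S_3) *)
  (forall x y z, distinct3 x y z -> chi y x z = - chi x y z) /\
  (forall x y z, distinct3 x y z -> chi x z y = - chi x y z) /\
  (forall p q r t, distinct3 p q r -> t != p -> t != q -> t != r ->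
     chi t q r = 1 -> chi p t r = 1 -> chi p q t = 1 -> chi p q r = 1) /\
  (forall p q r s t, distinct3 p q r -> t != p -> t != q -> t != r ->
     s != p -> s != q -> s != r -> s != t ->
     chi t s p = 1 -> chi t s q = 1 -> chi t s r = 1 ->
     chi t p q = 1 -> chi t q r = 1 -> chi t p r = 1).

Definition orient (R : realType) (a b c : R * R) : R :=
  (b.1 - a.1) * (c.2 - a.2) - (b.2 - a.2) * (c.1 - a.1).

Definition is_realization (R : realType) (X : finType)
    (chi : X -> X -> X -> int) (p : X -> R * R) : Prop :=
  forall x y z, distinct3 x y z ->
    orient (p x) (p y) (p z) != 0 /\
    (chi x y z = 1 <-> 0 < orient (p x) (p y) (p z)).

Definition realizable (R : realType) (X : finType) (chi : X -> X -> X -> int) :=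
  exists p : X -> R * R, is_realization chi p.

Definition is_extreme (X : finType) (chi : X -> X -> X -> int) (u : X) : Prop :=
  exists2 y, y != u & forall z z', z != u -> z != y -> z' != u -> z' != y ->
    chi u y z = chi u y z'.

Definition is_succ (X : finType) (chi : X -> X -> X -> int) (u up : X) : Prop :=
  up != u /\ forall z, z != u -> z != up -> chi u up z = 1.

Definition is_pred (X : finType) (chi : X -> X -> X -> int) (u um : X) : Prop :=
  um != u /\ forall z, z != u -> z != um -> chi um u z = 1.

From HB Require Import structures.
From mathcomp Require Import all_boot all_order all_algebra.
From mathcomp Require Import reals.
From mathcomp Require Import ring lra zify.
Import Order.TTheory GRing.Theory Num.Theory.
Local Open Scope ring_scope.
Set Implicit Arguments. Unset Strict Implicit.

(* Normalize a realization by the affine map sending p_u, p_u+, p_u- to (0,1),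
   (0,0), (1,0); as u+ and u- are the hull neighbours of u, every other point
   then lies strictly below the line y = 1. The projective map
   (x, y) |-> ((1 + e) x, e y) / (1 + e - y) fixes these three points,
   preserves orientations below y = 1 + e, and maps the segment from (0,1) to
   (0,1+e) onto the whole ray above (0,1). For e small enough, that segment
   meets no line (p_x p_y) with x, y != u, since none of them passes through
   (0,1); hence after the transformation the ray meets none either. *)

Section PlaneMaps.
Variable R : realType.
Implicit Types (a b c z : R * R) (e t : R).

Lemma orient_vshift a b c t :
  orient a b (c.1, c.2 + t) = orient a b c + t * (b.1 - a.1).
Proof. rewrite /orient /=; ring. Qed.

Definition orient_preserving (P : R * R -> Prop) (f : R * R -> R * R) :=
  forall a b c, P a -> P b -> P c ->
    exists2 k, 0 < k & orient (f a) (f b) (f c) = k * orient a b c.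

Lemma orient_preserving_gt0 P f a b c : orient_preserving P f ->
  P a -> P b -> P c -> (0 < orient (f a) (f b) (f c)) = (0 < orient a b c).
Proof.
by move=> fP Pa Pb Pc; have [k k_gt0 ->] := fP a b c Pa Pb Pc; rewrite pmulr_rgt0.
Qed.

Lemma orient_preserving_eq0 P f a b c : orient_preserving P f ->
  P a -> P b -> P c -> (orient (f a) (f b) (f c) == 0) = (orient a b c == 0).
Proof.
by move=> fP Pa Pb Pc; have [k k_gt0 ->] := fP a b c Pa Pb Pc; rewrite mulf_eq0 gt_eqF.
Qed.

Definition frame_coords a b c z :=
  (orient a b z / orient a b c, orient b c z / orient a b c).

Lemma orient_frame_coords a b c z1 z2 z3 : orient a b c != 0 ->
  orient (frame_coords a b c z1) (frame_coords a b c z2) (frame_coords a b c z3) =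
  (orient a b c)^-1 * orient z1 z2 z3.
Proof. by move=> abc_neq0; rewrite /frame_coords /orient /=; field. Qed.

Lemma frame_coords_preserving a b c : 0 < orient a b c ->
  orient_preserving (fun=> True) (frame_coords a b c).
Proof.
move=> abc_gt0 z1 z2 z3 _ _ _; exists (orient a b c)^-1; first by rewrite invr_gt0.
by rewrite orient_frame_coords ?gt_eqF.
Qed.

Lemma frame_coords_frame a b c : orient a b c != 0 ->
  [/\ frame_coords a b c a = (0, 1), frame_coords a b c b = (0, 0)
    & frame_coords a b c c = (1, 0)].
Proof.
move=> abc_neq0; rewrite /frame_coords; split; congr pair;
  rewrite /orient; field; exact: abc_neq0.
Qed.

Definition perspective e z :=
  ((1 + e) * z.1 / (1 + e - z.2), e * z.2 / (1 + e - z.2)).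

Lemma orient_perspective e a b c :
  1 + e - a.2 != 0 -> 1 + e - b.2 != 0 -> 1 + e - c.2 != 0 ->
  orient (perspective e a) (perspective e b) (perspective e c) =
  e * (1 + e) ^+ 2 / ((1 + e - a.2) * (1 + e - b.2) * (1 + e - c.2)) * orient a b c.
Proof. by move=> a2 b2 c2; rewrite /perspective /orient /=; field; rewrite a2 b2 c2. Qed.

Lemma perspective_preserving e : 0 < e ->
  orient_preserving (fun z => z.2 < 1 + e) (perspective e).
Proof.
move=> e_gt0 a b c a2 b2 c2.
have [a2' b2' c2'] : [/\ 0 < 1 + e - a.2, 0 < 1 + e - b.2 & 0 < 1 + e - c.2].
  by split; rewrite subr_gt0.
eexists; last by rewrite orient_perspective // gt_eqF.
have e1_gt0 : 0 < 1 + e by lra.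
by rewrite !(mulr_gt0, exprn_gt0, invr_gt0).
Qed.

Lemma perspective_frame e : 0 < e ->
  [/\ perspective e (0, 1) = (0, 1), perspective e (0, 0) = (0, 0)
    & perspective e (1, 0) = (1, 0)].
Proof.
move=> e_gt0; rewrite /perspective; split; congr pair => /=; field;
  rewrite ?subr0 gt_eqF //; lra.
Qed.

Lemma perspective_ray e t : 0 < e -> 0 <= t ->
  exists2 s, 0 <= s < e & perspective e (0, 1 + s) = (0, 1 + t).
Proof.
move=> e_gt0 t_ge0; have den_gt0 : 0 < 1 + e + t by lra.
exists (e * t / (1 + e + t)).
  by rewrite divr_ge0 ?mulr_ge0 ?(ltW e_gt0) ?(ltW den_gt0) //= ltr_pdivrMr //; nra.
rewrite /perspective; congr pair => /=; first by rewrite !(mulr0, mul0r).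
by field; rewrite !gt_eqF //; nra.
Qed.

Lemma orient_perspective_ray e a b t : 0 < e -> a.2 < 1 + e -> b.2 < 1 + e ->
  e * (1 + `|b.1 - a.1|) <= `|orient a b (0, 1)| -> 0 <= t ->
  orient (perspective e a) (perspective e b) (0, 1 + t) != 0.
Proof.
move=> e_gt0 a2 b2 margin t_ge0.
have [s /andP[s_ge0 s_lt] <-] := perspective_ray e_gt0 t_ge0.
rewrite (orient_preserving_eq0 (perspective_preserving e_gt0)) //=; last by lra.
rewrite (orient_vshift a b (0, 1)) /=.
apply/eqP => /(canRL (addrK _)); rewrite add0r => /(congr1 Num.norm).
rewrite normrN normrM ger0_norm // => eq_norm.
have : s * `|b.1 - a.1| <= e * `|b.1 - a.1| by rewrite ler_wpM2r // ltW.
have := normr_ge0 (b.1 - a.1); nra.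
Qed.

End PlaneMaps.

Lemma exists_neq2 (T : finType) (a b : T) : (3 <= #|T|)%N ->
  exists2 z, z != a & z != b.
Proof.
move=> card3; have [z] : exists z, z \in ~: [set a; b].
  apply/card_gt0P; move: card3.
  by rewrite -(cardsC [set a; b]) cards2; case: (a != b); lia.
by rewrite !inE negb_or => /andP[]; exists z.
Qed.

Section Realizations.
Variables (R : realType) (X : finType) (chi : X -> X -> X -> int).
Implicit Types (p q : X -> R * R) (u up um x y z : X).

Lemma realization_orient_gt0 p x y z : is_realization chi p ->
  distinct3 x y z -> chi x y z = 1 -> 0 < orient (p x) (p y) (p z).
Proof. by move=> p_real xyz /(p_real x y z xyz).2. Qed.

Lemma realization_comp (P : R * R -> Prop) f p : orient_preserving P f ->
  (forall x, P (p x)) -> is_realization chi p -> is_realization chi (f \o p).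
Proof.
move=> f_pres Pp p_real x y z xyz; have [neq0 chi_gt0] := p_real x y z xyz.
by rewrite /= (orient_preserving_eq0 f_pres) ?(orient_preserving_gt0 f_pres).
Qed.

Lemma normalized_realization q u up um : is_realization chi q ->
  distinct3 u up um -> chi u up um = 1 ->
  exists p, [/\ is_realization chi p, p u = (0, 1), p up = (0, 0) & p um = (1, 0)].
Proof.
move=> q_real u_up_um chi_gt0.
have abc_gt0 := realization_orient_gt0 q_real u_up_um chi_gt0.
have [fa fb fc] := frame_coords_frame (lt0r_neq0 abc_gt0).
exists (frame_coords (q u) (q up) (q um) \o q); split => //=.
exact: realization_comp (frame_coords_preserving abc_gt0) _ q_real.
Qed.

(* For [p z = (x, y)], [chi u up z = 1] gives [0 < x] and [chi um u z = 1]
   gives [x + y < 1]. *)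
Lemma normalized_realization_below p u up um :
  is_realization chi p -> p u = (0, 1) -> p up = (0, 0) -> p um = (1, 0) ->
  is_succ chi u up -> is_pred chi u um -> forall z, z != u -> (p z).2 < 1.
Proof.
move=> p_real pu pup pum [up_neq_u succ] [um_neq_u pred] z z_neq_u.
have [-> | z_neq_up] := eqVneq z up; first by rewrite pup.
have [-> | z_neq_um] := eqVneq z um; first by rewrite pum.
have := realization_orient_gt0 p_real _ (succ z z_neq_u z_neq_up).
have := realization_orient_gt0 p_real _ (pred z z_neq_u z_neq_um).
rewrite /distinct3 pu pup pum /orient /= um_neq_u (eq_sym u up) up_neq_u.
by rewrite !(eq_sym _ z) z_neq_u z_neq_up z_neq_um => /(_ isT) + /(_ isT); lra.
Qed.

Lemma ray_margin p u : is_realization chi p -> p u = (0, 1) ->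
  exists2 e, 0 < e & forall x y, x != u -> y != u -> x != y ->
    e * (1 + `|(p y).1 - (p x).1|) <= `|orient (p x) (p y) (0, 1)|.
Proof.
move=> p_real pu.
pose P (xy : X * X) := [&& xy.1 != u, xy.2 != u & xy.1 != xy.2].
pose g (xy : X * X) :=
  `|orient (p xy.1) (p xy.2) (0, 1)| / (1 + `|(p xy.2).1 - (p xy.1).1|).
have den_gt0 (x y : X) : 0 < 1 + `|(p y).1 - (p x).1| by rewrite ltr_pwDl.
exists (\big[Order.min/1]_(xy | P xy) g xy).
  apply: lt_bigmin => // -[x y] /and3P[/= x_neq_u y_neq_u x_neq_y].
  rewrite divr_gt0 // normr_gt0 -pu.
  by have [] := p_real x y u; first by rewrite /distinct3 x_neq_y y_neq_u x_neq_u.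
move=> x y x_neq_u y_neq_u x_neq_y.
have Pxy : P (x, y) by rewrite /P /= x_neq_u y_neq_u x_neq_y.
by rewrite -ler_pdivlMr //; exact: (bigmin_le_cond _ _ Pxy).
Qed.

Lemma succ_neq_pred u up um : (3 <= #|X|)%N ->
  (forall x y z, distinct3 x y z -> chi y x z = - chi x y z) ->
  is_succ chi u up -> is_pred chi u um -> um != up.
Proof.
move=> card3 chi_swap [up_neq_u succ] [_ pred].
have [z z_neq_u z_neq_up] := exists_neq2 u up card3.
have u_up_z : distinct3 u up z.
  by rewrite /distinct3 eq_sym up_neq_u !(eq_sym _ z) z_neq_u z_neq_up.
apply/eqP => um_up; move: (pred z z_neq_u); rewrite um_up.
by rewrite chi_swap // succ // => /(_ z_neq_up).
Qed.

End Realizations.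

Theorem lemma2p4 (R : realType) (X : finType) (chi : X -> X -> X -> int)
    (u up um : X) :
  (3 <= #|X|)%N ->
  is_chirotope chi ->
  realizable R chi ->
  is_extreme chi u ->
  is_succ chi u up ->
  is_pred chi u um ->
  exists p : X -> R * R,
    [/\ is_realization chi p,
        p u = (0, 1), p up = (0, 0), p um = (1, 0) &
        (* the half-line p_u + R_{>=0}(0,1) meets no line (p_x p_y) *)
        forall x y t, x != u -> y != u -> x != y -> 0 <= t ->
          orient (p x) (p y) ((p u).1, (p u).2 + t) != 0].
Proof.
move=> card3 [_ [chi_swap _]] [q q_real] _ succ pred.
have um_neq_up := succ_neq_pred card3 chi_swap succ pred.
have u_up_um : distinct3 u up um.
  by rewrite /distinct3 eq_sym succ.1 eq_sym um_neq_up eq_sym pred.1.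
have [p [p_real pu pup pum]] :=
  normalized_realization q_real u_up_um (succ.2 um pred.1 um_neq_up).
have p_below1 := normalized_realization_below p_real pu pup pum succ pred.
have [e e_gt0 margin] := ray_margin p_real pu.
have p_below z : (p z).2 < 1 + e.
  by have [-> | /p_below1] := eqVneq z u; [rewrite pu /=|]; lra.
have [persp_u persp_up persp_um] := perspective_frame e_gt0.
exists (perspective e \o p); split;
  rewrite /comp ?pu ?pup ?pum ?persp_u ?persp_up ?persp_um //.
  exact: realization_comp (perspective_preserving e_gt0) p_below p_real.
move=> x y t x_neq_u y_neq_u x_neq_y.
exact: orient_perspective_ray (p_below x) (p_below y)
  (margin x y x_neq_u y_neq_u x_neq_y).
Qed.
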